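(* Let $\mathcal{G}=(\mathcal{V},\mathcal{E},\mathbf{X})$ be an attributed graph with nodes $\mathcal{V}=\{v_1,\dots,v_n\}$ and node feature vectors $\mathbf{x}_{v}\in\mathbb{R}^d$ (row vectors), and suppose each node $v_i$ has a sensitive value $s_i\in\mathcal{A}=\{a_1,\dots,a_\zeta\}$. For $a\in\mathcal{A}$ let $\mathcal{V}_a=\{v_j: s_j=a\}$ and $\mathcal{V}_{\neq a}=\mathcal{V}\setminus\mathcal{V}_a$, both assumed nonempty. Let $\tilde{\mathbf{A}}\in\mathbb{R}^{n\times n}$ be the random walk probability matrix, where $\tilde{\mathbf{A}}[i,j]$ is the probability that a $K$-step random walk starting at $v_i$ terminates at $v_j$ (so each row of $\tilde{\mathbf{A}}$ is a probability distribution). Define $$\beta[a,a]=\frac{1}{|\mathcal{V}_a|}\sum_{v_i\in\mathcal{V}_a,\,v_j\in\mathcal{V}_a}\tilde{\mathbf{A}}[i,j],\qquad \beta[\neq a,a]=\frac{1}{|\mathcal{V}_{\neq a}|}\sum_{v_i\in\mathcal{V}_{\neq a},\,v_j\in\mathcal{V}_a}\tilde{\mathbf{A}}[i,j].$$ Let $\mu_a=\frac{1}{|\mathcal{V}_a|}\sum_{v\in\mathcal{V}_a}\mathbf{x}_v$, $\mu_{\neq a}=\frac{1}{|\mathcal{V}_{\neq a}|}\sum_{v\in\mathcal{V}_{\neq a}}\mathbf{x}_v$, $dev(\mathcal{V}_a)=\max_{v\in\mathcal{V}_a}\|\mathbf{x}_v-\mu_a\|_\infty$, $dev(\mathcal{V}_{\neq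 a})=\max_{v\in\mathcal{V}_{\neq a}}\|\mathbf{x}_v-\mu_{\neq a}\|_\infty$, and $\delta_a=\max\{dev(\mathcal{V}_a),dev(\mathcal{V}_{\neq a})\}$. Consider a $K$-layer simple GCN (SGCN) with parameter matrix $\mathbf{W}$, i.e. the model whose logit at node $v$ is $\mathbf{p}_v=\mathbf{h}_v\mathbf{W}$ with $\mathbf{h}_v=\sum_{u\in\mathcal{V}}\tilde{\mathbf{A}}[v,u]\,\mathbf{x}_u$, and let $$\hat{\mathcal{L}}_{\text{dp}}=\sum_{a\in\mathcal{A}}\left\|\frac{\sum_{v_i\in\mathcal{V}_a}\mathbf{p}_{v_i}}{|\mathcal{V}_a|}-\frac{\sum_{v_j\in\mathcal{V}_{\neq a}}\mathbf{p}_{v_j}}{|\mathcal{V}_{\neq a}|}\right\|_2 .$$ Then, for any such SGCN with parameters $\mathbf{W}$, $$\hat{\mathcal{L}}_{\text{dp}}\le\sum_{a\in\mathcal{A}}\|\mathbf{W}\|_2\left(|\beta[a,a]-\beta[\neq a,a]|\cdot\|\mu_a-\mu_{\neq a}\|_2+2\sqrt{d}\sum_{a'\in\mathcal{A}}\delta_{a'}\right),$$ where $\|\mathbf{W}\|_2$ is the spectral norm of $\mathbf{W}$.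
   Context: A simple GCN (SGCN) is a graph convolutional network without nonlinear activations between layers, so that its $K$-layer node representation is the $K$-step propagated feature $\mathbf{h}_v=\sum_{u}\tilde{\mathbf{A}}[v,u]\mathbf{x}_u$ and its prediction is $\sigma(\mathbf{h}_v\mathbf{W})$ with $\sigma$ the softmax; the vector $\mathbf{p}_v=\mathbf{h}_v\mathbf{W}$ (input to the softmax) is called the logit. $d$ is the dimension of the node feature vectors. *)

From HB Require Import structures.
From mathcomp Require Import all_boot all_order all_algebra.
From mathcomp Require Import classical_sets reals.
Set Implicit Arguments. Unset Strict Implicit. Unset Printing Implicit Defensive.
Import Order.TTheory GRing.Theory Num.Theory.
Local Open Scope ring_scope.
Local Open Scope classical_set_scope.

Section Defs.
Variable R : realType.

Definition norm2 m (v : 'rV[R]_m) : R := Num.sqrt (\sum_(i < m) v 0 i ^+ 2).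
Definition normInf m (v : 'rV[R]_m) : R := \big[Num.max/0]_(i < m) `|v 0 i|.

Definition spec_norm d c (W : 'M[R]_(d, c)) : R :=
  sup [set norm2 (x *m W) | x in [set x : 'rV[R]_d | norm2 x = 1]].

Definition degree n (e : rel 'I_n) (i : 'I_n) : nat := #|[set j | e i j]|.

Definition rw_step n (e : rel 'I_n) : 'M[R]_n :=
  \matrix_(i, j) ((e i j)%:R / (degree e i)%:R).

Definition rw_matrix n (e : rel 'I_n) (K : nat) : 'M[R]_n :=
  iter K (fun M => M *m rw_step e) 1%:M.

Definition grp n (A : finType) (s : 'I_n -> A) (a : A) : {set 'I_n} := [set i | s i == a].
Definition grpC n (A : finType) (s : 'I_n -> A) (a : A) : {set 'I_n} := [set i | s i != a].

Definition beta_in n (A : finType) (s : 'I_n -> A) (At : 'M[R]_n) (a : A) : R :=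
  (#|grp s a|%:R)^-1 * \sum_(i in grp s a) \sum_(j in grp s a) At i j.
Definition beta_out n (A : finType) (s : 'I_n -> A) (At : 'M[R]_n) (a : A) : R :=
  (#|grpC s a|%:R)^-1 * \sum_(i in grpC s a) \sum_(j in grp s a) At i j.

Definition mean n d (X : 'M[R]_(n, d)) (S : {set 'I_n}) : 'rV[R]_d :=
  (#|S|%:R)^-1 *: \sum_(v in S) row v X.
Definition dev n d (X : 'M[R]_(n, d)) (S : {set 'I_n}) : R :=
  \big[Num.max/0]_(v in S) normInf (row v X - mean X S).
Definition delta n d (A : finType) (s : 'I_n -> A) (X : 'M[R]_(n, d)) (a : A) : R :=
  Num.max (dev X (grp s a)) (dev X (grpC s a)).

Definition sgcn_h n d (At : 'M[R]_n) (X : 'M[R]_(n, d)) (v : 'I_n) : 'rV[R]_d :=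
  \sum_(u < n) At v u *: row u X.
Definition logit n d c (At : 'M[R]_n) (X : 'M[R]_(n, d)) (W : 'M[R]_(d, c)) (v : 'I_n)
  : 'rV[R]_c := sgcn_h At X v *m W.

Definition L_dp n d c (A : finType) (s : 'I_n -> A) (At : 'M[R]_n) (X : 'M[R]_(n, d))
  (W : 'M[R]_(d, c)) : R :=
  \sum_(a : A) norm2 ((#|grp s a|%:R)^-1 *: \sum_(i in grp s a) logit At X W i
                      - (#|grpC s a|%:R)^-1 *: \sum_(j in grpC s a) logit At X W j).

End Defs.

From HB Require Import structures.
From mathcomp Require Import all_boot all_order all_algebra.
From mathcomp Require Import boolp classical_sets reals.
From mathcomp Require Import ring lra.
Set Implicit Arguments. Unset Strict Implicit. Unset Printing Implicit Defensive.
Import Order.TTheory GRing.Theory Num.Theory.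
Local Open Scope ring_scope.

(* Fix a sensitive value a, put S = V_a and T = V_{<>a}, and write every
   feature as x_u = m(u) + e_u, where m(u) is mu_S for u in S and mu_T for u in
   T, so that |e_u|_oo <= delta_a.  As the random walk matrix is
   row-stochastic, h_i = mu_T + alpha_i (mu_S - mu_T) + g_i, where alpha_i is
   the probability that the walk from v_i ends in S and g_i, a convex
   combination of the e_u, has |g_i|_oo <= delta_a.  Averaging over S and over
   T, the group means of h differ by (beta[a,a] - beta[<>a,a]) (mu_S - mu_T)
   plus a vector of sup norm at most 2 delta_a, hence of Euclidean norm at
   most 2 sqrt(d) delta_a; multiplying by W costs the factor ||W||_2. *)

Lemma ler_sum_term (R : numDomainType) (I : finType) (F : I -> R) j :
  (forall i, 0 <= F i) -> F j <= \sum_i F i.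
Proof. by move=> F_ge0; rewrite (bigD1 j) //= lerDl sumr_ge0. Qed.

Section Norms.
Variables (R : realType) (m : nat).
Implicit Types (u v : 'rV[R]_m).

Lemma sqr_norm2 v : norm2 v ^+ 2 = \sum_i v 0 i ^+ 2.
Proof. by rewrite sqr_sqrtr // sumr_ge0 // => i _; rewrite sqr_ge0. Qed.

Lemma norm2_ge0 v : 0 <= norm2 v.
Proof. exact: sqrtr_ge0. Qed.

Lemma norm20 : norm2 (0 : 'rV[R]_m) = 0.
Proof. by rewrite /norm2 big1 ?sqrtr0 // => i _; rewrite mxE expr0n. Qed.

Lemma norm2_eq0 v : norm2 v = 0 -> v = 0.
Proof.
move/eqP; rewrite -sqrf_eq0 sqr_norm2 => /eqP /psumr_eq0P v2_eq0.
apply/rowP => i; apply/eqP; rewrite mxE -sqrf_eq0 v2_eq0 // => j _.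
exact: sqr_ge0.
Qed.

Lemma norm2Z k v : norm2 (k *: v) = `|k| * norm2 v.
Proof.
rewrite /norm2 -sqrtr_sqr -sqrtrM ?sqr_ge0 // mulr_sumr.
by congr Num.sqrt; apply: eq_bigr => i _; rewrite mxE exprMn.
Qed.

Lemma normr_le_norm2 v i : `|v 0 i| <= norm2 v.
Proof.
rewrite -sqrtr_sqr ler_sqrt ?sumr_ge0 // => [|j _]; last exact: sqr_ge0.
by apply: ler_sum_term => j; exact: sqr_ge0.
Qed.

Lemma sum_mul_le_norm2 u v : \sum_i u 0 i * v 0 i <= norm2 u * norm2 v.
Proof.
have [/norm2_eq0 ->|u_neq0] := eqVneq (norm2 u) 0.
  by rewrite norm20 mul0r big1 // => i _; rewrite mxE mul0r.
have [/norm2_eq0 ->|v_neq0] := eqVneq (norm2 v) 0.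
  by rewrite norm20 mulr0 big1 // => i _; rewrite mxE mulr0.
set S := \sum_i _; set a := norm2 u; set b := norm2 v.
have ab_gt0 : 0 < a * b by rewrite mulr_gt0 // lt_def ?u_neq0 ?v_neq0 norm2_ge0.
(* expanding [0 <= \sum_i (b u_i - a v_i)^2] gives [0 <= 2 a b (a b - S)] *)
have : 0 <= \sum_i (b * u 0 i - a * v 0 i) ^+ 2 by apply: sumr_ge0 => i _; exact: sqr_ge0.
have -> : \sum_i (b * u 0 i - a * v 0 i) ^+ 2 =
          b ^+ 2 * \sum_i u 0 i ^+ 2 - 2 * (a * b) * S + a ^+ 2 * \sum_i v 0 i ^+ 2.
  rewrite /S !mulr_sumr -sumrN -!big_split /=.
  by apply: eq_bigr => i _; ring.
rewrite -!sqr_norm2 -/a -/b; nra.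
Qed.

Lemma ler_norm2D u v : norm2 (u + v) <= norm2 u + norm2 v.
Proof.
rewrite -ler_sqr ?nnegrE ?addr_ge0 ?norm2_ge0 // sqrrD !sqr_norm2.
have -> : \sum_i (u + v) 0 i ^+ 2 =
          \sum_i u 0 i ^+ 2 + 2 * \sum_i u 0 i * v 0 i + \sum_i v 0 i ^+ 2.
  by rewrite mulr_sumr -!big_split /=; apply: eq_bigr => i _; rewrite mxE; ring.
have := sum_mul_le_norm2 u v; lra.
Qed.

Lemma normInf_ge0 v : 0 <= normInf v.
Proof. exact: bigmax_ge_id. Qed.

Lemma normr_le_normInf v i : `|v 0 i| <= normInf v.
Proof. exact: (@le_bigmax _ R). Qed.

Lemma normInf_le v b : 0 <= b -> (forall i, `|v 0 i| <= b) -> normInf v <= b.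
Proof. by move=> b_ge0 vb; apply: bigmax_le. Qed.

Lemma ler_normInfB u v : normInf (u - v) <= normInf u + normInf v.
Proof.
apply: normInf_le => [|i]; first by rewrite addr_ge0 ?normInf_ge0.
by rewrite !mxE (le_trans (ler_normB _ _)) // lerD ?normr_le_normInf.
Qed.

Lemma norm2_le_normInf v : norm2 v <= Num.sqrt m%:R * normInf v.
Proof.
have vInf_ge0 := normInf_ge0 v.
rewrite -[normInf v]ger0_norm // -sqrtr_sqr -sqrtrM ?ler0n //.
rewrite ler_sqrt ?mulr_ge0 ?ler0n ?sqr_ge0 //.
rewrite -[m in m%:R]card_ord -sumr_const mulr_suml ler_sum // => i _.
by rewrite mul1r -real_normK ?num_real // ler_sqr ?nnegrE // normr_le_normInf.
Qed.

Lemma normInf_convex_le (I : finType) (P : pred I) (w : I -> R) (x : I -> 'rV[R]_m) b :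
  0 <= b -> (forall i, P i -> 0 <= w i) -> \sum_(i | P i) w i = 1 ->
  (forall i, P i -> normInf (x i) <= b) ->
  normInf (\sum_(i | P i) w i *: x i) <= b.
Proof.
move=> b_ge0 w_ge0 w_sum1 xb; apply: normInf_le => // k.
rewrite summxE (le_trans (ler_norm_sum _ _ _)) //.
rewrite -[X in _ <= X]mul1r -w_sum1 mulr_suml ler_sum // => i Pi.
rewrite mxE normrM ger0_norm ?w_ge0 // ler_wpM2l ?w_ge0 //.
exact: le_trans (normr_le_normInf _ k) (xb i Pi).
Qed.

End Norms.

Section SpectralNorm.
Local Open Scope classical_set_scope.
Variables (R : realType) (d c : nat) (W : 'M[R]_(d, c)).

Let unit_image := [set norm2 (x *m W) | x in [set x : 'rV[R]_d | norm2 x = 1]].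

Lemma spec_norm_ubound : has_ubound unit_image.
Proof.
exists (Num.sqrt c%:R * \sum_i \sum_k `|W i k|) => _ [y /= y1 <-].
rewrite (le_trans (norm2_le_normInf _)) // ler_wpM2l ?sqrtr_ge0 //.
apply: normInf_le => [|k]; first by do 2!apply: sumr_ge0 => ? _.
rewrite mxE (le_trans (ler_norm_sum _ _ _)) // ler_sum // => i _.
rewrite normrM (@le_trans _ _ `|W i k|) //.
  by rewrite ler_piMl // -y1 normr_le_norm2.
by apply: ler_sum_term => j; exact: normr_ge0.
Qed.

Lemma spec_norm_ge0 : 0 <= spec_norm W.
Proof.
rewrite /spec_norm -/unit_image.
have [[_ [x x1 _]]|empty] := pselect (unit_image !=set0); last first.
  by rewrite (_ : unit_image = set0) ?sup0 // -subset0 => t ?; apply: empty; exists t.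
apply: le_trans (norm2_ge0 (x *m W)) _; apply: sup_upper_bound; last by exists x.
by split; [exists (norm2 (x *m W)), x | exact: spec_norm_ubound].
Qed.

Lemma norm2_mulmx_le x : norm2 (x *m W) <= spec_norm W * norm2 x.
Proof.
have [/norm2_eq0 ->|x_neq0] := eqVneq (norm2 x) 0.
  by rewrite mul0mx !norm20 mulr0.
have x_gt0 : 0 < norm2 x by rewrite lt_def x_neq0 norm2_ge0.
set y := (norm2 x)^-1 *: x.
have y1 : norm2 y = 1 by rewrite norm2Z ger0_norm ?invr_ge0 ?norm2_ge0 // mulVf.
have yW : norm2 (y *m W) = (norm2 x)^-1 * norm2 (x *m W).
  by rewrite -scalemxAl norm2Z ger0_norm ?invr_ge0 ?norm2_ge0.
have : norm2 (y *m W) <= spec_norm W.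
  apply: sup_upper_bound; last by exists y.
  by split; [exists (norm2 (y *m W)), y | exact: spec_norm_ubound].
by rewrite yW ler_pdivrMl // mulrC.
Qed.

End SpectralNorm.

Section Stochastic.
Variables (R : realType) (n : nat).

Definition row_stochastic (M : 'M[R]_n) :=
  (forall i j, 0 <= M i j) /\ M *m const_mx 1 = const_mx 1 :> 'cV_n.

Lemma row_stochastic1 : row_stochastic 1%:M.
Proof. by split=> [i j|]; rewrite ?mul1mx // mxE ler0n. Qed.

Lemma row_stochasticM M N :
  row_stochastic M -> row_stochastic N -> row_stochastic (M *m N).
Proof.
move=> [M_ge0 M1] [N_ge0 N1]; split; last by rewrite -mulmxA N1.
by move=> i j; rewrite mxE sumr_ge0 // => k _; rewrite mulr_ge0.
Qed.

Lemma row_stochastic_sum M i : row_stochastic M -> \sum_j M i j = 1.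
Proof.
move=> [_ /matrixP/(_ i 0)]; rewrite !mxE => <-.
by apply: eq_bigr => j _; rewrite mxE mulr1.
Qed.

Lemma degreeE (e : rel 'I_n) i : degree e i = #|e i|.
Proof. by apply: eq_card => j; rewrite /in_mem /= /in_set asboolb. Qed.

Lemma rw_step_stochastic (e : rel 'I_n) :
  (forall i, (0 < degree e i)%N) -> row_stochastic (rw_step R e).
Proof.
move=> deg_gt0; split=> [i j|]; first by rewrite mxE divr_ge0 ?ler0n.
apply/matrixP => i k; rewrite !mxE.
under eq_bigr do rewrite !mxE mulr1.
rewrite -mulr_suml (_ : \sum_j _ = (degree e i)%:R) ?divff ?pnatr_eq0 -?lt0n //.
rewrite degreeE -sum1_card natr_sum [RHS]big_mkcond; apply: eq_bigr => j _.
by rewrite unfold_in; case: (e i j).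
Qed.

Lemma rw_matrix_stochastic (e : rel 'I_n) K :
  (forall i, (0 < degree e i)%N) -> row_stochastic (rw_matrix R e K).
Proof.
move=> deg_gt0; elim: K => [|K IH]; first exact: row_stochastic1.
exact: row_stochasticM IH (rw_step_stochastic deg_gt0).
Qed.

End Stochastic.

Section Aggregation.
Variables (R : realType) (n d : nat) (At : 'M[R]_n) (X : 'M[R]_(n, d)).

Definition avg (V : lmodType R) (S : {set 'I_n}) (f : 'I_n -> V) : V :=
  (#|S|%:R)^-1 *: \sum_(i in S) f i.

Definition beta (T S : {set 'I_n}) : R :=
  (#|T|%:R)^-1 * \sum_(i in T) \sum_(j in S) At i j.

Lemma avg_affine (V : lmodType R) (S : {set 'I_n}) (c v : V) (a : 'I_n -> R) g :
  (0 < #|S|)%N ->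
  avg S (fun i => c + a i *: v + g i) =
  c + ((#|S|%:R)^-1 * \sum_(i in S) a i) *: v + avg S g.
Proof.
move=> S_gt0; rewrite /avg !big_split /= sumr_const -scaler_suml !scalerDr scalerA.
by rewrite -scaler_nat scalerA mulVf ?pnatr_eq0 -?lt0n // scale1r.
Qed.

Lemma normInf_avg_le (S : {set 'I_n}) (f : 'I_n -> 'rV[R]_d) b :
  (0 < #|S|)%N -> 0 <= b -> (forall i, i \in S -> normInf (f i) <= b) ->
  normInf (avg S f) <= b.
Proof.
move=> S_gt0 b_ge0 fb; rewrite /avg scaler_sumr.
apply: normInf_convex_le => // [i _|]; first by rewrite invr_ge0 ler0n.
by rewrite sumr_const -[_^-1 *+ _]mulr_natr mulVf // pnatr_eq0 -lt0n.
Qed.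

Lemma avg_mulmx c (S : {set 'I_n}) (f : 'I_n -> 'rV[R]_d) (W : 'M[R]_(d, c)) :
  avg S (fun i => f i *m W) = avg S f *m W.
Proof. by rewrite /avg -mulmx_suml scalemxAl. Qed.

Lemma sgcn_h_split (S : {set 'I_n}) (m1 m0 : 'rV[R]_d) i :
  \sum_j At i j = 1 ->
  sgcn_h At X i = m0 + (\sum_(u in S) At i u) *: (m1 - m0)
                  + \sum_u At i u *: (row u X - (if u \in S then m1 else m0)).
Proof.
move=> rowsum1.
have centers : \sum_u At i u *: (if u \in S then m1 else m0) =
               m0 + (\sum_(u in S) At i u) *: (m1 - m0).
  transitivity (\sum_u (At i u *: m0 + (if u \in S then At i u else 0) *: (m1 - m0))).
    apply: eq_bigr => u _; case: ifP => _; last by rewrite scale0r addr0.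
    by rewrite -scalerDr addrC subrK.
  by rewrite big_split /= -!scaler_suml rowsum1 scale1r -big_mkcond.
by rewrite -centers (eq_bigr _ (fun u _ => scalerBr _ _ _)) sumrB addrC subrK.
Qed.

Lemma norm2_avg_sgcn_h_gap (S T : {set 'I_n}) (m1 m0 : 'rV[R]_d) b :
  row_stochastic At -> (0 < #|S|)%N -> (0 < #|T|)%N -> 0 <= b ->
  (forall u, normInf (row u X - (if u \in S then m1 else m0)) <= b) ->
  norm2 (avg S (sgcn_h At X) - avg T (sgcn_h At X)) <=
  `|beta S S - beta T S| * norm2 (m1 - m0) + 2 * Num.sqrt d%:R * b.
Proof.
move=> At_st S_gt0 T_gt0 b_ge0 residual_le.
pose g i := \sum_u At i u *: (row u X - (if u \in S then m1 else m0)).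
have g_le i : normInf (g i) <= b.
  apply: normInf_convex_le => // [u _|]; [by case: At_st | exact: row_stochastic_sum].
have avg_h (U : {set 'I_n}) : (0 < #|U|)%N ->
    avg U (sgcn_h At X) = m0 + (beta U S *: (m1 - m0) + avg U g).
  move=> U_gt0; rewrite addrA -avg_affine //; congr (_ *: _); apply: eq_bigr => i _.
  exact/sgcn_h_split/row_stochastic_sum.
rewrite !avg_h // [m0 + _]addrC addrKA opprD addrACA -scalerBl.
apply: le_trans (ler_norm2D _ _) _; rewrite norm2Z lerD2l.
apply: le_trans (norm2_le_normInf _) _.
have : normInf (avg S g - avg T g) <= 2 * b.
  by rewrite mulr2n mulrDl mul1r (le_trans (ler_normInfB _ _)) // lerD ?normInf_avg_le.
have := sqrtr_ge0 (d%:R : R); nra.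
Qed.

End Aggregation.

Section SensitiveGroups.
Variables (R : realType) (n d : nat) (A : finType) (s : 'I_n -> A) (X : 'M[R]_(n, d)).

Lemma normInf_sub_mean_le_dev (S : {set 'I_n}) u :
  u \in S -> normInf (row u X - mean X S) <= dev X S.
Proof. exact: (@le_bigmax_cond _ R). Qed.

Lemma delta_ge0 a : 0 <= delta s X a.
Proof. by rewrite le_max bigmax_ge_id. Qed.

Lemma normInf_sub_group_mean_le_delta a u :
  normInf (row u X - (if u \in grp s a then mean X (grp s a) else mean X (grpC s a)))
  <= delta s X a.
Proof.
rewrite le_max; case: ifPn => u_a; first by rewrite normInf_sub_mean_le_dev.
by rewrite normInf_sub_mean_le_dev ?orbT // inE; rewrite inE in u_a.
Qed.

Lemma L_dpE c (At : 'M[R]_n) (W : 'M[R]_(d, c)) :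
  L_dp s At X W =
  \sum_a norm2 (avg (grp s a) (logit At X W) - avg (grpC s a) (logit At X W)).
Proof. by []. Qed.

Lemma beta_inE (At : 'M[R]_n) a : beta_in s At a = beta At (grp s a) (grp s a).
Proof. by []. Qed.

Lemma beta_outE (At : 'M[R]_n) a : beta_out s At a = beta At (grpC s a) (grp s a).
Proof. by []. Qed.

End SensitiveGroups.

Theorem theorem1 (R : realType) (n d c K : nat) (A : finType)
  (e : rel 'I_n) (X : 'M[R]_(n, d)) (s : 'I_n -> A) (W : 'M[R]_(d, c)) :
  symmetric e ->
  (forall i : 'I_n, (0 < degree e i)%N) ->
  (forall a : A, (0 < #|grp s a|)%N /\ (0 < #|grpC s a|)%N) ->
  let At := rw_matrix R e K in
  L_dp s At X W <=
  \sum_(a : A) spec_norm W *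
     (`|beta_in s At a - beta_out s At a| * norm2 (mean X (grp s a) - mean X (grpC s a))
      + 2 * Num.sqrt (d%:R) * \sum_(a' : A) delta s X a').
Proof.
move=> _ deg_gt0 grp_gt0; cbv zeta.
have At_st := rw_matrix_stochastic R K deg_gt0; set At := rw_matrix R e K in At_st *.
rewrite L_dpE; apply: ler_sum => a _; have [Sa_gt0 Ta_gt0] := grp_gt0 a.
rewrite !avg_mulmx -mulmxBl (le_trans (norm2_mulmx_le _ _)) //.
rewrite ler_wpM2l ?spec_norm_ge0 // beta_inE beta_outE.
rewrite (le_trans (norm2_avg_sgcn_h_gap At_st Sa_gt0 Ta_gt0 (delta_ge0 s X a)
                    (normInf_sub_group_mean_le_delta s X a))) //.
rewrite lerD2l ler_wpM2l ?mulr_ge0 ?sqrtr_ge0 //.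
by apply: ler_sum_term => a'; exact: delta_ge0.
Qed.
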